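(* Let $g$ be an even $C^1$ function defined in a neighbourhood of $0\in\mathbb{C}$ with $g(z)=o(z)$, and suppose $g$ satisfies the polynomial condition with respect to a polynomial $p(\zeta_1,\zeta_2)$. Then $g$ also satisfies the polynomial condition with respect to the odd part $p_{\mathrm{odd}}(\zeta_1,\zeta_2)=\tfrac12\bigl(p(\zeta_1,\zeta_2)-p(-\zeta_1,-\zeta_2)\bigr)$ of $p$ (equivalently, the sum of the homogeneous components of $p$ of odd degree).
   Context: All functions defined near the origin are assumed to be of class $C^1$. Polynomials $p(\zeta_1,\zeta_2)$ are holomorphic polynomials in two complex variables with complex coefficients. Polynomial condition: let $g$ be an even $C^1$ function defined near $0\in\mathbb{C}$ with $g(z)=o(z)$ as $z\to0$. We say $g$ satisfies the polynomial condition with respect to the polynomial $p$ if for every $C^1$ function $R$ defined near $0$ with $R(z)=o(g(z))$ as $z\to 0$, both $\operatorname{Im} p(z,\bar z+g(z)+R(z))>0$ and $\operatorname{Im} p(z,\bar z-g(z)+R(z))<0$ hold for all $z\neq0$ sufficiently close to $0$ (the neighbourhood may depend on $R$). *)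

From Stdlib Require Import Reals.
From Coquelicot Require Import Coquelicot.
Open Scope R_scope.

Fixpoint csum (n : nat) (f : nat -> C) : C :=
  match n with
  | O => RtoC 0
  | S m => Cplus (csum m f) (f m)
  end.

Definition poly2 (N : nat) (c : nat -> nat -> C) (z1 z2 : C) : C :=
  csum N (fun i => csum N (fun j => Cmult (c i j) (Cmult (Cpow z1 i) (Cpow z2 j)))).

Definition odd_part (p : C -> C -> C) (z1 z2 : C) : C :=
  Cmult (RtoC (/ 2)) (Cminus (p z1 z2) (p (Copp z1) (Copp z2))).

(* f : C -> C is of class C^1 (in the real sense, C = R^2) on some disc
   around 0: the partial derivatives of Re f and Im f with respect to x and y
   exist and are continuous at every point of the disc. *)
Definition comp_C1_on (u : R -> R -> R) (r : R) : Prop :=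
  (forall x y, Cmod (x, y) < r ->
     ex_derive (fun t => u t y) x /\ ex_derive (fun t => u x t) y) /\
  (forall x y, Cmod (x, y) < r ->
     continuous (fun q : R * R => Derive (fun t => u t (snd q)) (fst q)) (x, y) /\
     continuous (fun q : R * R => Derive (fun t => u (fst q) t) (snd q)) (x, y)).

Definition C1_near0 (f : C -> C) : Prop :=
  exists r, 0 < r /\
    comp_C1_on (fun x y => Re (f (x, y))) r /\
    comp_C1_on (fun x y => Im (f (x, y))) r.

Definition even_near0 (f : C -> C) : Prop :=
  exists r, 0 < r /\ forall z, Cmod z < r -> f (Copp z) = f z.

Definition little_o0 (f h : C -> C) : Prop :=
  forall eps, 0 < eps -> exists delta, 0 < delta /\
    forall z, Cmod z < delta -> Cmod (f z) <= eps * Cmod (h z).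

Definition poly_condition (g : C -> C) (p : C -> C -> C) : Prop :=
  forall Rf : C -> C, C1_near0 Rf -> little_o0 Rf g ->
    exists delta, 0 < delta /\
      forall z, 0 < Cmod z < delta ->
        0 < Im (p z (Cplus (Cplus (Cconj z) (g z)) (Rf z))) /\
        Im (p z (Cplus (Cminus (Cconj z) (g z)) (Rf z))) < 0.

(* If R is an admissible
   perturbation, so is w |-> -R(-w).  Applying the condition for it at -z and
   using that g is even, the second arguments become the negatives of those
   for R at z, with the two branches exchanged; so Im p(-z, -(conj z ± g + R))
   has the sign opposite to Im p(z, conj z ± g + R).  Averaging the two gives
   the odd part of p. *)

From Stdlib Require Import Reals Lra.
From Coquelicot Require Import Coquelicot.
Open Scope R_scope.

Definition point_reflection (f : C -> C) (w : C) : C := Copp (f (Copp w)).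

Lemma locally_Cmod_lt (z : C) (r : R) :
  Cmod z < r -> locally (z : R * R) (fun q : R * R => Cmod q < r).
Proof.
  intros Hz.
  assert (Hsqrt2 : sqrt 2 < 2).
  { rewrite <- (sqrt_square 2) at 2 by lra. apply sqrt_lt_1; lra. }
  assert (He : 0 < (r - Cmod z) / 2) by lra.
  exists (mkposreal _ He); intros q Hq.
  pose proof (C_NormedModule_mixin_compat2 z q (mkposreal _ He) Hq) as Hd; simpl in Hd.
  change (minus q z) with (Cminus q z) in Hd.
  replace q with (Cplus z (Cminus q z))
    by (unfold Cminus; rewrite Cplus_comm, <- Cplus_assoc, (Cplus_comm _ z), Cplus_opp_r;
        apply Cplus_0_r).
  pose proof (Cmod_triangle z (Cminus q z)). nra.
Qed.

Lemma is_derive_point_reflection (f : R -> R) (x l : R) :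
  is_derive f (- x) l -> is_derive (fun t => - f (- t)) x l.
Proof.
  intros Hf.
  assert (Hopp : is_derive (fun t => - t) x (-1)) by (auto_derive; [exact I | ring]).
  replace l with (opp (scal (-1) l)) by (unfold opp, scal; simpl; unfold mult; simpl; ring).
  exact (is_derive_opp _ _ _ (is_derive_comp f (fun t => - t) x l (-1) Hf Hopp)).
Qed.

Lemma continuous_point_reflection2 (q : R * R) :
  continuous (fun q : R * R => (- fst q, - snd q)) q.
Proof.
  apply (continuous_comp_2 (fun q : R * R => - fst q) (fun q : R * R => - snd q)
           (fun a b => (a, b))).
  - apply (continuous_comp fst Ropp); [apply continuous_fst | exact (continuous_opp (fun t : R => t) _ (continuous_id _))].
  - apply (continuous_comp snd Ropp); [apply continuous_snd | exact (continuous_opp (fun t : R => t) _ (continuous_id _))].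
  - apply continuous_ext with (f := fun q : R * R => q); [now intros [] | apply continuous_id].
Qed.

Lemma comp_C1_on_point_reflection (u : R -> R -> R) (r : R) :
  comp_C1_on u r -> comp_C1_on (fun x y => - u (- x) (- y)) r.
Proof.
  intros [Hex Hcont].
  assert (Hball : forall x y, Cmod (x, y) < r -> Cmod (- x, - y) < r).
  { intros x y Hxy. change (- x, - y) with (Copp (x, y)). now rewrite Cmod_opp. }
  assert (Dx : forall x y, Cmod (x, y) < r ->
            is_derive (fun t => - u (- t) (- y)) x (Derive (fun t => u t (- y)) (- x))).
  { intros x y Hxy. apply (is_derive_point_reflection (fun t => u t (- y))), Derive_correct.
    exact (proj1 (Hex _ _ (Hball _ _ Hxy))). }
  assert (Dy : forall x y, Cmod (x, y) < r ->
            is_derive (fun t => - u (- x) (- t)) y (Derive (fun t => u (- x) t) (- y))).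
  { intros x y Hxy. apply (is_derive_point_reflection (fun t => u (- x) t)), Derive_correct.
    exact (proj2 (Hex _ _ (Hball _ _ Hxy))). }
  split.
  - intros x y Hxy. split; eexists; [apply Dx | apply Dy]; exact Hxy.
  - intros x y Hxy. destruct (Hcont _ _ (Hball _ _ Hxy)) as [Cx Cy].
    split.
    + eapply continuous_ext_loc.
      2: { apply (continuous_comp (fun q : R * R => (- fst q, - snd q))
                    (fun q : R * R => Derive (fun t => u t (snd q)) (fst q))).
           - apply continuous_point_reflection2.
           - exact Cx. }
      eapply filter_imp; [| exact (locally_Cmod_lt (x, y) r Hxy)].
      intros [a b] Hab. symmetry. apply is_derive_unique, Dx, Hab.
    + eapply continuous_ext_loc.
      2: { apply (continuous_comp (fun q : R * R => (- fst q, - snd q))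
                    (fun q : R * R => Derive (fun t => u (fst q) t) (snd q))).
           - apply continuous_point_reflection2.
           - exact Cy. }
      eapply filter_imp; [| exact (locally_Cmod_lt (x, y) r Hxy)].
      intros [a b] Hab. symmetry. apply is_derive_unique, Dy, Hab.
Qed.

Lemma C1_near0_point_reflection (f : C -> C) :
  C1_near0 f -> C1_near0 (point_reflection f).
Proof.
  intros [r [Hr [Hre Him]]]. exists r.
  split; [exact Hr | split].
  - exact (comp_C1_on_point_reflection _ _ Hre).
  - exact (comp_C1_on_point_reflection _ _ Him).
Qed.

Lemma little_o0_point_reflection (f h : C -> C) :
  even_near0 h -> little_o0 f h -> little_o0 (point_reflection f) h.
Proof.
  intros [r [Hr Heven]] Hf eps Heps.
  destruct (Hf eps Heps) as [d [Hd Hfd]].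
  exists (Rmin d r). split; [now apply Rmin_pos |].
  intros z Hz. apply Rmin_Rgt in Hz as [Hzd Hzr].
  unfold point_reflection. rewrite Cmod_opp, <- (Heven z Hzr).
  apply Hfd. now rewrite Cmod_opp.
Qed.

Lemma Im_odd_part (p : C -> C -> C) (z1 z2 : C) :
  Im (odd_part p z1 z2) = / 2 * (Im (p z1 z2) - Im (p (Copp z1) (Copp z2))).
Proof.
  unfold odd_part. destruct (p z1 z2), (p _ _).
  unfold Cmult, Cminus, Cplus, Copp, RtoC, Im; simpl. ring.
Qed.

Lemma Copp_involutive (z : C) : Copp (Copp z) = z.
Proof. destruct z; unfold Copp; simpl; f_equal; ring. Qed.

Lemma Copp_conj_add (z a b : C) :
  Copp (Cplus (Cplus (Cconj z) a) b) = Cplus (Cminus (Cconj (Copp z)) a) (Copp b).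
Proof. destruct z, a, b; unfold Cplus, Cminus, Copp, Cconj; simpl; f_equal; ring. Qed.

Lemma Copp_conj_sub (z a b : C) :
  Copp (Cplus (Cminus (Cconj z) a) b) = Cplus (Cplus (Cconj (Copp z)) a) (Copp b).
Proof. destruct z, a, b; unfold Cplus, Cminus, Copp, Cconj; simpl; f_equal; ring. Qed.

Lemma poly_condition_odd_part (g : C -> C) (p : C -> C -> C) :
  even_near0 g -> poly_condition g p -> poly_condition g (odd_part p).
Proof.
  intros Heven Hp Rf HC1 Ho.
  pose proof Heven as [r [Hr Hg]].
  destruct (Hp Rf HC1 Ho) as [d1 [Hd1 H1]].
  destruct (Hp (point_reflection Rf) (C1_near0_point_reflection Rf HC1)
              (little_o0_point_reflection Rf g Heven Ho)) as [d2 [Hd2 H2]].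
  exists (Rmin (Rmin d1 d2) r). split; [now repeat apply Rmin_pos |].
  intros z [Hz0 Hz]. apply Rmin_Rgt in Hz as [Hz Hzr]. apply Rmin_Rgt in Hz as [Hzd1 Hzd2].
  destruct (H1 z (conj Hz0 Hzd1)) as [Hplus Hminus].
  assert (Hmz : 0 < Cmod (Copp z) < d2) by (rewrite Cmod_opp; now split).
  destruct (H2 (Copp z) Hmz) as [Hplus' Hminus'].
  unfold point_reflection in Hplus', Hminus'.
  rewrite (Hg z Hzr), Copp_involutive, <- Copp_conj_sub in Hplus'.
  rewrite (Hg z Hzr), Copp_involutive, <- Copp_conj_add in Hminus'.
  rewrite !Im_odd_part. split; lra.
Qed.

Theorem lemma2p3 (g : C -> C) (N : nat) (c : nat -> nat -> C) :
  C1_near0 g -> even_near0 g -> little_o0 g (fun z => z) ->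
  poly_condition g (poly2 N c) ->
  poly_condition g (odd_part (poly2 N c)).
Proof.
  intros _ Heven _. exact (poly_condition_odd_part g (poly2 N c) Heven).
Qed.
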